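(* A connected split graph is connected-domishold if and only if it is total domishold.
   Context: A graph is split if its vertex set can be partitioned into a clique and an independent set. A connected dominating set of a connected graph $G$ is a set $S\subseteq V(G)$ such that every vertex not in $S$ has a neighbor in $S$ and $G[S]$ is connected. A graph $G=(V,E)$ is connected-domishold if there exist $w:V\to\mathbb{R}_{\ge0}$ and $t\in\mathbb{R}_{\ge0}$ such that for all $S\subseteq V$, $\sum_{x\in S}w(x)\ge t$ iff $S$ is a connected dominating set. A total dominating set of $G$ is a set $S\subseteq V(G)$ such that every vertex of $G$ has a neighbor in $S$. $G$ is total domishold if there exist $w:V\to\mathbb{R}_{\ge0}$ and $t\in\mathbb{R}_{\ge0}$ such that for all $S\subseteq V$, $\sum_{x\in S}w(x)\ge t$ iff $S$ is a total dominating set of $G$. *)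

From mathcomp Require Import all_boot.
From Stdlib Require Import Reals.
Set Implicit Arguments. Unset Strict Implicit. Unset Printing Implicit Defensive.

Definition simple_graph (T : finType) (e : rel T) : Prop :=
  symmetric e /\ irreflexive e.

Definition induced_connected (T : finType) (e : rel T) (S : {set T}) : Prop :=
  forall x y, x \in S -> y \in S ->
    connect (fun u v => [&& u \in S, v \in S & e u v]) x y.

Definition connected_graph (T : finType) (e : rel T) : Prop :=
  0 < #|T| /\ induced_connected e [set: T].

Definition is_clique (T : finType) (e : rel T) (K : {set T}) : Prop :=
  forall x y, x \in K -> y \in K -> x != y -> e x y.

Definition is_independent (T : finType) (e : rel T) (I : {set T}) : Prop :=
  forall x y, x \in I -> y \in I -> ~~ e x y.

Definition split_graph (T : finType) (e : rel T) : Prop :=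
  exists K I : {set T}, [disjoint K & I] /\ K :|: I = [set: T] /\
    is_clique e K /\ is_independent e I.

Definition dominating (T : finType) (e : rel T) (S : {set T}) : Prop :=
  forall x, x \notin S -> exists2 y, y \in S & e x y.

Definition connected_dominating (T : finType) (e : rel T) (S : {set T}) : Prop :=
  dominating e S /\ induced_connected e S.

Definition total_dominating (T : finType) (e : rel T) (S : {set T}) : Prop :=
  forall x, exists2 y, y \in S & e x y.

Definition wsum (T : finType) (w : T -> R) (S : {set T}) : R :=
  List.fold_right Rplus 0%R (List.map w (enum S)).

Definition threshold_family (T : finType) (P : {set T} -> Prop) : Prop :=
  exists (w : T -> R) (t : R), (forall x, (0 <= w x)%R) /\ (0 <= t)%R /\
    forall S : {set T}, (t <= wsum w S)%R <-> P S.

Definition connected_domishold (T : finType) (e : rel T) : Prop :=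
  threshold_family (connected_dominating e).

Definition total_domishold (T : finType) (e : rel T) : Prop :=
  threshold_family (total_dominating e).

(* In a split graph, a connected dominating set that contains no universal
   vertex is already total dominating, and conversely every total dominating
   set is connected dominating.  So the two families differ only on sets that
   meet the set U of universal vertices: every such set is connected
   dominating, while it is total dominating exactly when it has a second
   vertex.  Threshold weights are transferred across this difference by
   changing the weights on U: raising them to the threshold in one direction,
   and in the other setting them to [t - eps] while adding a small [eps] to all
   other weights, with [eps] below the gap that separates the sums of
   non-solutions from the threshold. *)
From HB Require Import structures.
From mathcomp Require Import all_boot.
From Stdlib Require Import Reals Lra.
Set Implicit Arguments. Unset Strict Implicit. Unset Printing Implicit Defensive.

HB.instance Definition _ := Monoid.isComLaw.Build R 0%R Rplus
  (fun a b c => esym (Rplus_assoc a b c)) Rplus_comm Rplus_0_l.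

Section WeightSums.
Variable T : finType.
Implicit Types (w : T -> R) (S : {set T}).

Lemma wsumE w S : wsum w S = \big[Rplus/0%R]_(x in S) w x.
Proof.
rewrite /wsum -big_enum; elim: (enum S) => [|a s IHs] /=.
  by rewrite big_nil.
by rewrite big_cons IHs.
Qed.

Lemma eq_wsum w1 w2 S : {in S, w1 =1 w2} -> wsum w1 S = wsum w2 S.
Proof. by move=> eq_w; rewrite !wsumE; apply: eq_bigr. Qed.

Lemma wsum_set0 w : wsum w set0 = 0%R.
Proof. by rewrite wsumE big_set0. Qed.

Lemma wsum_set1 w x : wsum w [set x] = w x.
Proof. by rewrite wsumE big_set1. Qed.

Lemma wsumD1 w S x : x \in S -> wsum w S = (w x + wsum w (S :\ x))%R.
Proof.
move=> xS; rewrite !wsumE (bigD1 x) //=; congr (_ + _)%R.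
by apply: eq_bigl => y; rewrite !inE andbC.
Qed.

Lemma wsum_ge0 w S : (forall x, 0 <= w x)%R -> (0 <= wsum w S)%R.
Proof.
move=> w_ge0; rewrite wsumE.
by apply: (big_ind (fun a => 0 <= a)%R) => //; [lra | move=> *; lra].
Qed.

Lemma wsum_ge_mem w S x : (forall x, 0 <= w x)%R -> x \in S -> (w x <= wsum w S)%R.
Proof.
by move=> w_ge0 xS; rewrite (wsumD1 w xS); have := wsum_ge0 (S :\ x) w_ge0; lra.
Qed.

Lemma wsum_ge_mem2 w S x y : (forall x, 0 <= w x)%R -> x \in S -> y \in S ->
  x != y -> (w x + w y <= wsum w S)%R.
Proof.
move=> w_ge0 xS yS xy; rewrite (wsumD1 w xS).
have yS' : y \in S :\ x by rewrite !inE eq_sym xy.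
have := wsum_ge_mem w_ge0 yS'; lra.
Qed.

Lemma wsumDc w c S :
  wsum (fun x => w x + c)%R S = (wsum w S + INR #|S| * c)%R.
Proof.
rewrite !wsumE big_split /= big_const; congr (_ + _)%R.
by elim: #|S| => [|n IHn]; rewrite ?iterS ?IHn ?S_INR /=; lra.
Qed.

Lemma finite_lower_bound (X : finType) (f : X -> R) :
  (forall x, 0 < f x)%R -> exists2 d, (0 < d)%R & forall x, (d <= f x)%R.
Proof.
move=> f_gt0.
suff [d d_gt0 dP] : exists2 d, (0 < d)%R & forall x, x \in enum X -> (d <= f x)%R.
  by exists d => // x; apply: dP; rewrite mem_enum.
elim: (enum X) => [|a s [d d_gt0 dP]]; first by exists 1%R => //; lra.
exists (Rmin d (f a)); first exact: Rmin_glb_lt.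
move=> x; rewrite inE => /orP [/eqP ->|xs]; first exact: Rmin_r.
exact: Rle_trans (Rmin_l _ _) (dP x xs).
Qed.

Lemma wsum_threshold_gap w t : exists2 d, (0 < d)%R &
  forall S, (wsum w S < t)%R -> (wsum w S + d <= t)%R.
Proof.
pose f S := if Rlt_dec (wsum w S) t then (t - wsum w S)%R else 1%R.
have [d d_gt0 dP] : exists2 d, (0 < d)%R & forall S, (d <= f S)%R.
  by apply: finite_lower_bound => S; rewrite /f; case: Rlt_dec => /=; lra.
exists d => // S lt_t; have := dP S; rewrite /f; case: Rlt_dec => /=; lra.
Qed.

End WeightSums.

Section ThresholdTransfer.
Variables (T : finType) (P Q : {set T} -> Prop) (U : {set T}).
Implicit Type S : {set T}.
Hypothesis PQ_off : forall S, (forall x, x \in S -> x \notin U) -> (P S <-> Q S).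

Lemma threshold_family_raise :
  (forall S u, u \in S -> u \in U -> P S) ->
  threshold_family Q -> threshold_family P.
Proof.
move=> P_meet [w [t [w_ge0 [t_ge0 wQ]]]].
pose w' x := (w x + if x \in U then t else 0)%R.
have w'_ge0 x : (0 <= w' x)%R by rewrite /w'; case: (x \in U); have := w_ge0 x; lra.
exists w', t; split=> //; split=> // S.
case: (boolP [exists u in S, u \in U]) => [/exists_inP [u uS uU]|/exists_inPn offU].
  split=> _; first exact: (P_meet S u).
  by have := wsum_ge_mem w'_ge0 uS; rewrite /w' uU; have := w_ge0 u; lra.
rewrite PQ_off // -wQ (@eq_wsum _ w' w) // => x xS.
by rewrite /w' (negbTE (offU x xS)) Rplus_0_r.
Qed.

Lemma threshold_family_lower :
  ~ P set0 ->
  (forall S u, u \in S -> u \in U -> (Q S <-> exists2 v, v \in S & v != u)) ->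
  threshold_family P -> threshold_family Q.
Proof.
move=> notP0 Q_meet [w [t [w_ge0 [t_ge0 wP]]]].
have [d d_gt0 gap] := wsum_threshold_gap w t.
have d_le_t : (d <= t)%R.
  have t_gt0 : (0 < t)%R.
    by apply: Rnot_le_lt => t_le0; apply: notP0; apply/wP; rewrite wsum_set0.
  by have := gap set0; rewrite wsum_set0 => /(_ t_gt0); lra.
have card_T_ge0 : (0 <= INR #|T|)%R := pos_INR _.
(* Small enough that [#|S| * eps < d] for every [S], and [2 * eps <= t]. *)
pose eps := (d / (2 * (INR #|T| + 1)))%R.
have eps_def : (2 * (INR #|T| + 1) * eps = d)%R by rewrite /eps; field; lra.
have eps_gt0 : (0 < eps)%R by nra.
have eps_le : (2 * eps <= t)%R by nra.
pose w' x := if x \in U then (t - eps)%R else (w x + eps)%R.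
have w'_ge0 x : (0 <= w' x)%R by rewrite /w'; case: (x \in U); have := w_ge0 x; nra.
exists w', t; split=> //; split=> // S.
case: (boolP [exists u in S, u \in U]) => [/exists_inP [u uS uU]|/exists_inPn offU].
  rewrite (Q_meet S u uS uU); split=> [ge_t|[v vS vu]].
    case: (boolP [exists v in S, v != u]) => [/exists_inP //|/exists_inPn only_u].
    have S1 : S = [set u].
      apply/setP => x; rewrite inE; apply/idP/eqP => [xS|->//].
      by apply/eqP; apply: contraNT (only_u x xS).
    by move: ge_t; rewrite S1 wsum_set1 /w' uU; lra.
  have := wsum_ge_mem2 w'_ge0 uS vS; rewrite eq_sym => /(_ vu).
  by rewrite /w' uU; case: (v \in U); have := w_ge0 v; lra.
have -> : wsum w' S = (wsum w S + INR #|S| * eps)%R.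
  by rewrite -wsumDc; apply: eq_wsum => x xS; rewrite /w' (negbTE (offU x xS)).
have card_S : (0 <= INR #|S| <= INR #|T|)%R.
  by split; [exact: pos_INR | apply: le_INR; apply/leP; exact: max_card].
rewrite -PQ_off // -wP; split=> [ge_t|]; last by nra.
by case: (Rlt_le_dec (wsum w S) t) => // /gap; nra.
Qed.

End ThresholdTransfer.

Section SplitGraphDomination.
Variables (T : finType) (e : rel T).
Hypothesis e_sym : symmetric e.
Implicit Type S : {set T}.

Definition universal_vertices : {set T} := [set u | [forall v, (v != u) ==> e u v]].

Definition induced_rel S : rel T := fun u v => [&& u \in S, v \in S & e u v].

Lemma universal_adj u v : u \in universal_vertices -> v != u -> e u v.
Proof. by rewrite inE => /forallP /(_ v) /implyP. Qed.

Lemma induced_connect_sym S : connect_sym (induced_rel S).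
Proof.
apply: sym_connect_sym => u v; rewrite /induced_rel e_sym.
by case: (u \in S); case: (v \in S).
Qed.

Lemma induced_connected_adj S x y : induced_connected e S ->
  x \in S -> y \in S -> x != y -> exists2 z, z \in S & e x z.
Proof.
move=> connS xS yS; move: (connS x y xS yS) => /connectP [[|z p] /=].
  by move=> _ eq_yx; rewrite eq_yx eqxx in yS *.
by case/andP=> /and3P [_ zS exz] _ _; exists z.
Qed.

Lemma connected_dominating_universal S u :
  u \in S -> u \in universal_vertices -> connected_dominating e S.
Proof.
move=> uS uU; have u_to z : z \in S -> connect (induced_rel S) u z.
  move=> zS; case: (eqVneq z u) => [->|zu]; first exact: connect0.
  by apply: connect1; rewrite /induced_rel uS zS universal_adj.
split=> [x xS|x y xS yS]; last first.
  by apply: connect_trans (u_to y yS); rewrite induced_connect_sym; apply: u_to.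
exists u => //; rewrite e_sym universal_adj //.
by apply: contraNneq xS => ->.
Qed.

Lemma total_dominating_universal S u : irreflexive e ->
  u \in S -> u \in universal_vertices ->
  (total_dominating e S <-> exists2 v, v \in S & v != u).
Proof.
move=> e_irr uS uU; split=> [TD|[v vS vu] x].
  have [v vS euv] := TD u; exists v => //.
  by apply: contraTneq euv => ->; rewrite e_irr.
case: (eqVneq x u) => [->|xu]; first by exists v; rewrite ?universal_adj.
by exists u; rewrite // e_sym universal_adj.
Qed.

(* A nonuniversal vertex of [S] misses some [v]; a neighbour of it along
   [G[S]] is [v] itself if [v \in S], and otherwise a dominator of [v]. *)
Lemma connected_dominating_total S : connected_dominating e S ->
  (forall x, x \in S -> x \notin universal_vertices) -> total_dominating e S.
Proof.
move=> [domS connS] offU x.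
case: (boolP (x \in S)) => [xS|]; last exact: domS.
have := offU x xS; rewrite inE negb_forall => /existsP [v].
rewrite negb_imply => /andP [vx not_exv].
case: (boolP (v \in S)) => [vS|vNS].
  by apply: (induced_connected_adj connS xS vS); rewrite eq_sym.
have [y yS evy] := domS v vNS.
apply: (induced_connected_adj connS xS yS).
by apply: contraNneq not_exv => ->; rewrite e_sym.
Qed.

Lemma total_dominating_connected S : split_graph e ->
  total_dominating e S -> connected_dominating e S.
Proof.
case=> K [I [_ [KUI [K_clique I_indep]]]] TD; split=> [x _|]; first exact: TD.
have KorI x : (x \in K) || (x \in I) by rewrite -in_setU KUI inE.
have anchor x : x \in S -> exists2 z, (z \in S) && (z \in K) & connect (induced_rel S) z x.
  move=> xS; case/orP: (KorI x) => [xK|xI]; first by exists x; rewrite ?xS ?xK.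
  have [z zS exz] := TD x; exists z; last by apply: connect1; rewrite /induced_rel zS xS e_sym.
  rewrite zS; case/orP: (KorI z) => // zI.
  by rewrite (negbTE (I_indep x z xI zI)) in exz.
move=> x y xS yS.
have [zx /andP [zxS zxK] zx_x] := anchor x xS.
have [zy /andP [zyS zyK] zy_y] := anchor y yS.
have x_zx : connect (induced_rel S) x zx by rewrite induced_connect_sym.
apply: connect_trans x_zx (connect_trans _ zy_y).
case: (eqVneq zx zy) => [->|zxy]; first exact: connect0.
by apply: connect1; rewrite /induced_rel zxS zyS K_clique.
Qed.

End SplitGraphDomination.

Theorem mainTheorem5 (T : finType) (e : rel T) :
  simple_graph e -> connected_graph e -> split_graph e ->
  (connected_domishold e <-> total_domishold e).
Proof.
move=> [e_sym e_irr] [/card_gt0P [x0 _] _] split_e.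
have CD_TD_off (S : {set T}) : (forall x, x \in S -> x \notin universal_vertices e) ->
    (connected_dominating e S <-> total_dominating e S).
  move=> offU; split; first by move/(connected_dominating_total e_sym); apply.
  exact: total_dominating_connected.
have notCD0 : ~ connected_dominating e set0.
  by case=> dom0 _; have [y] := dom0 x0 (negbT (in_set0 x0)); rewrite in_set0.
split.
- apply: (threshold_family_lower CD_TD_off notCD0) => S u uS uU.
  exact: total_dominating_universal.
- apply: (threshold_family_raise CD_TD_off) => S u uS uU.
  exact: connected_dominating_universal uS uU.
Qed.
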